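(* Let $T$ be a ranked monad on $\mathbf{Set}$. Then the set of points $\mathrm{pt}(\mathrm{LB}_1T)$ of the locale of transitions is in bijection with the set $\mathbb{B}_1T$ of morphisms of the behaviour category of $T$.
   Context: A monad $T$ on $\mathbf{Set}$: sets $TA$, $\mathrm{return}\,a\in TA$, $\mathbin{\gg\!=}\colon TA\times(TB)^A\to TB$ with the monad laws; $t\gg s:=t\mathbin{\gg\!=}\lambda a.s$. Ranked of rank $\kappa$: every $t\in TA$ is $t'\mathbin{\gg\!=}\lambda i.\mathrm{return}\,f(i)$ with $t'\in TI$, $|I|<\kappa$ ($\kappa$ regular). $1=\{*\}$, $2=\{0,1\}$. Behaviour category: an admissible behaviour is a natural transformation $\beta\colon T\to\mathrm{id}_{\mathbf{Set}}$ with $\beta(t\mathbin{\gg\!=}u)=\beta(t\gg u(\beta(t)))$ for all $t\in TA$, $u\colon A\to TB$. For such $\beta$, $\sim_\beta$ is the least equivalence relation on $T1$ with $(t\mathbin{\gg\!=}u)\sim_\beta(t\gg u(\beta(t)))$ for all $t\in TA$, $u\colon A\to T1$. $\mathbb{B}_1T$ is the set of pairs $(\beta,[t]_\beta)$ with $\beta$ an admissible behaviour and $[t]_\beta$ a $\sim_\beta$-class of $T1$. Behaviour locale $\mathrm{LB}_0T$: frame presented by generators $[b]$ ($b\in T2$) subject to $[t\mapsto a]\wedge[t\mapsto a']=\bot$ ($a\ne a'$), $[t\gg\mathrm{return}\,a\mapsto a]=\top$, $[t\mathbin{\gg\!=}u\mapsto b]=\bigvee_a[t\mapsto a]\wedge[t\gg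 u(a)\mapsto b]$ for all $t\in TA$, $u\colon A\to TB$, $b\in B$, where $[t\mapsto a]:=[t\mathbin{\gg\!=}\lambda a'.\mathrm{return}(\delta_a(a'))]$, $\delta_a(a')=1$ iff $a'=a$. Trace equivalence: $[\![m\sim_1m']\!]=\bigvee\{[t\mapsto a]: |A|\le\kappa, t\in TA, u,u'\colon A\to T1, a\in A, u(a)=u'(a), m=t\mathbin{\gg\!=}u, m'=t\mathbin{\gg\!=}u'\}$; for $k\ge2$, $[\![m_1\sim_km_k]\!]=\bigvee\{\bigwedge_{i=1}^{k-1}[\![m_i\sim_1m_{i+1}]\!]: m_2,\ldots,m_{k-1}\in T1\}$; $[\![m\sim m']\!]=\bigvee_{k\ge1}[\![m\sim_km']\!]$; for complemented $b$, $m\sim_bm'$ iff $b\le[\![m\sim m']\!]$. The locale of transitions $\mathrm{LB}_1T$ has frame the set of functions $w\colon T1\to\mathcal{O}(\mathrm{LB}_0T)$ with $b\wedge w(m_1)=b\wedge w(m_2)$ whenever $b$ is complemented and $m_1\sim_bm_2$, ordered pointwise. Points of a locale $L$ are frame homomorphisms $\mathcal{O}(L)\to\{\bot,\top\}$. *)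

From Stdlib Require Import List Relations ClassicalDescription.
Import ListNotations.

Set Implicit Arguments.
Unset Strict Implicit.

Record monad := Monad {
  M :> Type -> Type;
  ret : forall A : Type, A -> M A;
  bind : forall A B : Type, M A -> (A -> M B) -> M B;
  bind_ret_l : forall A B (a : A) (f : A -> M B), bind (ret a) f = f a;
  bind_ret_r : forall A (t : M A), bind t (@ret A) = t;
  bind_assoc : forall A B C (t : M A) (f : A -> M B) (g : B -> M C),
      bind (bind t f) g = bind t (fun a => bind (f a) g)
}.
Arguments ret {m A}.
Arguments bind {m A B}.

Definition mthen (T : monad) A B (t : T A) (s : T B) : T B := bind t (fun _ => s).

Definition inj_into (A B : Type) : Prop :=
  exists f : A -> B, forall x y, f x = f y -> x = y.
(* |I| < kappa, with kappa represented by a type K *)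
Definition card_lt (I K : Type) : Prop := inj_into I K /\ ~ inj_into K I.
Definition card_le (A K : Type) : Prop := inj_into A K.
Definition regular (K : Type) : Prop :=
  inj_into nat K /\
  forall (I : Type) (F : I -> Type),
    card_lt I K -> (forall i, card_lt (F i) K) -> card_lt {i : I & F i} K.

Definition has_rank (T : monad) (K : Type) : Prop :=
  forall (A : Type) (t : T A), exists (I : Type) (t' : T I) (f : I -> A),
    card_lt I K /\ t = bind t' (fun i => ret (f i)).

Definition fmap (T : monad) A B (f : A -> B) (t : T A) : T B :=
  bind t (fun a => ret (f a)).

Definition admissible (T : monad) (beta : forall A : Type, T A -> A) : Prop :=
  (forall A B (f : A -> B) (t : T A), beta B (fmap f t) = f (beta A t)) /\
  (forall A B (t : T A) (u : A -> T B),
      beta B (bind t u) = beta B (mthen t (u (beta A t)))).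

Definition beh_step (T : monad) (beta : forall A : Type, T A -> A)
  (m m' : T unit) : Prop :=
  exists (A : Type) (t : T A) (u : A -> T unit),
    m = bind t u /\ m' = mthen t (u (beta A t)).

Definition beh_eq (T : monad) (beta : forall A : Type, T A -> A) :
  T unit -> T unit -> Prop := clos_refl_sym_trans _ (beh_step beta).

Definition is_beh_class (T : monad) (beta : forall A : Type, T A -> A)
  (C : T unit -> Prop) : Prop :=
  exists t : T unit, forall m, C m <-> beh_eq beta t m.

Definition B1 (T : monad) : Type :=
  { bp : { beta : forall A : Type, T A -> A | admissible beta } &
    { C : T unit -> Prop | is_beh_class (proj1_sig bp) C } }.

(* 2 = bool, with 0 = false and 1 = true. *)
Definition delta (A : Type) (a a' : A) : bool :=
  if excluded_middle_informative (a' = a) then true else false.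

Definition mapsto (T : monad) A (t : T A) (a : A) : T bool :=
  bind t (fun a' => ret (delta a a')).

(* The free frame on generators T2: down-sets of the free meet-semilattice,
   i.e. sets of finite lists of generators (a list standing for the meet of
   its members) closed under enlarging the list. *)
Definition Fin (T : monad) := list (T bool).

Definition upclosed (T : monad) (D : Fin T -> Prop) : Prop :=
  forall s s', incl s s' -> D s -> D s'.

Definition gen (T : monad) (b : T bool) : Fin T -> Prop := fun s => In b s.

(* The defining relations (l = r) of LB_0 T, as pairs of free-frame elements
   (meet = intersection, join = union, top = everything, bottom = empty). *)
Inductive LB0_rel (T : monad) : (Fin T -> Prop) -> (Fin T -> Prop) -> Prop :=
| rel_disj : forall (A : Type) (t : T A) (a a' : A), a <> a' ->
    LB0_rel (fun s => gen (mapsto t a) s /\ gen (mapsto t a') s) (fun _ => False)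
| rel_ret : forall (A B : Type) (t : T A) (a : B),
    LB0_rel (gen (mapsto (mthen t (ret a)) a)) (fun _ => True)
| rel_bind : forall (A B : Type) (t : T A) (u : A -> T B) (b : B),
    LB0_rel (gen (mapsto (bind t u) b))
            (fun s => exists a : A, gen (mapsto t a) s /\ gen (mapsto (mthen t (u a)) b) s).

(* The presented frame is (isomorphic to) the set of free-frame elements x
   saturated for the relations: for every relation (l,r) and every basic
   element c,  l /\ c <= x  <->  r /\ c <= x. *)
Definition saturated (T : monad) (D : Fin T -> Prop) : Prop :=
  forall l r, LB0_rel l r -> forall s : Fin T,
    (forall s', incl s s' -> l s' -> D s') <-> (forall s', incl s s' -> r s' -> D s').

Record O0 (T : monad) := MkO0 {
  o0 :> Fin T -> Prop;
  o0_up : upclosed o0;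
  o0_sat : saturated o0
}.

Definition le0 (T : monad) (x y : O0 T) : Prop := forall s, x s -> y s.

(* least element of O(LB_0 T) containing a free-frame element P (the image of
   P under the quotient map); joins in O(LB_0 T) are cl of unions, meets are
   intersections. *)
Definition cl (T : monad) (P : Fin T -> Prop) : Fin T -> Prop :=
  fun s => forall E : O0 T, (forall s', P s' -> E s') -> E s.

Definition complemented (T : monad) (b : O0 T) : Prop :=
  exists c : O0 T,
    (forall x : O0 T, le0 x b -> le0 x c -> forall y, le0 x y) /\
    (forall x : O0 T, le0 b x -> le0 c x -> forall y, le0 y x).

Definition tr1 (T : monad) (K : Type) (m m' : T unit) : Fin T -> Prop :=
  cl (fun s => exists (A : Type) (t : T A) (u u' : A -> T unit) (a : A),
        card_le A K /\ u a = u' a /\ m = bind t u /\ m' = bind t u' /\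
        cl (gen (mapsto t a)) s).

Fixpoint chain (T : monad) (K : Type) (s : Fin T) (x : T unit)
  (ms : list (T unit)) (y : T unit) : Prop :=
  match ms with
  | [] => tr1 K x y s
  | m :: ms' => tr1 K x m s /\ chain K s m ms' y
  end.

Definition trk (T : monad) (K : Type) (k : nat) (m1 mk : T unit) : Fin T -> Prop :=
  cl (fun s => exists ms : list (T unit), length ms = k - 2 /\ chain K s m1 ms mk).

Definition tr (T : monad) (K : Type) (m m' : T unit) : Fin T -> Prop :=
  cl (fun s => tr1 K m m' s \/ exists k, 2 <= k /\ trk K k m m' s).

Definition sim_b (T : monad) (K : Type) (b : O0 T) (m m' : T unit) : Prop :=
  forall s, b s -> tr K m m' s.

Definition O1 (T : monad) (K : Type) : Type :=
  { w : T unit -> O0 T |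
    forall b : O0 T, complemented b -> forall m1 m2, sim_b K b m1 m2 ->
      forall s, (b s /\ w m1 s) <-> (b s /\ w m2 s) }.

Definition le1 (T : monad) (K : Type) (w w' : O1 T K) : Prop :=
  forall m, le0 (proj1_sig w m) (proj1_sig w' m).

(* Written order-theoretically: p preserves the top, binary meets and
   arbitrary joins (meets/joins being glbs/lubs for the frame order). *)
Definition frame_hom2 (X : Type) (le : X -> X -> Prop) (p : X -> bool) : Prop :=
  (forall w, (forall w', le w' w) -> p w = true) /\
  (forall w w1 w2, le w w1 -> le w w2 ->
     (forall z, le z w1 -> le z w2 -> le z w) -> p w = andb (p w1) (p w2)) /\
  (forall (S : X -> Prop) w, (forall x, S x -> le x w) ->
     (forall z, (forall x, S x -> le x z) -> le w z) ->
     (p w = true <-> exists x, S x /\ p x = true)).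

Definition pt_LB1 (T : monad) (K : Type) : Type :=
  { p : O1 T K -> bool | frame_hom2 (@le1 T K) p }.

Definition in_bijection (A B : Type) : Prop :=
  exists (f : A -> B) (g : B -> A),
    (forall x, g (f x) = x) /\ (forall y, f (g y) = y).

(* A point [p] of [LB_1 T] determines a behaviour: since the generators [[t |-> a]]
   (a : A) are pairwise disjoint and cover the top, [p] selects exactly one [a =: beta t],
   and the relations of [LB_0 T] make [beta] admissible.  It also selects an [m] at
   which [m' |-> [[m ~ m']]] holds, and transport along trace equivalence shows that
   [p w] holds iff [w m] holds at the point of [LB_0 T] induced by [beta].  Conversely
   [(beta, [m])] gives the point [w |-> pt0 beta (w m)]; it does not depend on the
   representative because, after factoring [t] through a set of size [< kappa] (rank),
   each step [t >>= u ~ t >> u (beta t)] is a trace equivalence above the complemented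
   [[t |-> beta t]], along which every [w] is compatible.  Finally the point induced by
   [beta] validates [[m ~ m']] only when [m ~_beta m'], so the constructions are inverse. *)

From Stdlib Require Import List Relations Bool ClassicalDescription
  FunctionalExtensionality PropExtensionality ProofIrrelevance Lia.
From Stdlib Require ClassicalEpsilon.
Import ListNotations.

(* [delta a a'] is definitionally [bool_of (a' = a)]. *)
Definition bool_of (P : Prop) : bool :=
  if excluded_middle_informative P then true else false.

Lemma bool_of_true (P : Prop) : bool_of P = true <-> P.
Proof.
  unfold bool_of; destruct (excluded_middle_informative P); split; intros H;
    solve [auto | discriminate | contradiction].
Qed.

Lemma bool_of_ext (P Q : Prop) : (P <-> Q) -> bool_of P = bool_of Q.
Proof. intros H. f_equal. exact (propositional_extensionality _ _ H). Qed.

Lemma bool_of_and (P Q R : Prop) : (P <-> Q /\ R) -> bool_of P = andb (bool_of Q) (bool_of R).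
Proof.
  intros H. unfold bool_of.
  destruct (excluded_middle_informative P), (excluded_middle_informative Q),
    (excluded_middle_informative R); tauto || reflexivity.
Qed.

Lemma incl_app_comm {A : Type} (s t : list A) : incl (s ++ t) (t ++ s).
Proof. apply incl_app; [apply incl_appr | apply incl_appl]; apply incl_refl. Qed.

Section Transitions.
Variables (T : monad) (K : Type).
Implicit Types (P Q l r : Fin T -> Prop) (D E : O0 T) (s : Fin T).

Lemma cl_sub {P s} : P s -> cl P s.
Proof. intros HP E HE; exact (HE s HP). Qed.

Lemma cl_least {P} E : (forall s, P s -> E s) -> forall s, cl P s -> E s.
Proof. intros HE s Hs; exact (Hs E HE). Qed.

Lemma cl_mono P Q : (forall s, P s -> Q s) -> forall s, cl P s -> cl Q s.
Proof. intros HPQ s Hs E HE; apply Hs; intros s' Hs'; apply HE, HPQ, Hs'. Qed.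

Lemma cl_upclosed {P} : upclosed (cl P).
Proof. intros s s' Hi Hs E HE; exact (o0_up Hi (Hs E HE)). Qed.

Lemma cl_saturated {P} : saturated (cl P).
Proof.
  intros l r Hlr s; split; intros H s' Hs' Hx E HE.
  - apply (proj1 (o0_sat E Hlr s)); auto. intros s'' H1 H2; exact (H s'' H1 H2 E HE).
  - apply (proj2 (o0_sat E Hlr s)); auto. intros s'' H1 H2; exact (H s'' H1 H2 E HE).
Qed.

Definition closure P : O0 T := MkO0 (@cl_upclosed P) (@cl_saturated P).

Lemma gen_upclosed (b : T bool) : upclosed (gen b).
Proof. intros s s' Hi H; exact (Hi b H). Qed.

Lemma LB0_rel_upclosed {l r} : LB0_rel l r -> upclosed l /\ upclosed r.
Proof.
  intros []; split; intros s s' Hi Hs; unfold gen in *; auto.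
  - destruct Hs; split; apply Hi; auto.
  - destruct Hs as [a [H1 H2]]; exists a; split; apply Hi; auto.
Qed.

(* The Heyting implication [s0 => E]; the meet of basic elements is concatenation. *)
Lemma himpl_upclosed E s0 : upclosed (fun t => E (t ++ s0)).
Proof. intros t t' Hi H; refine (o0_up _ H). apply incl_app_app; auto using incl_refl. Qed.

Lemma himpl_saturated E s0 : saturated (fun t => E (t ++ s0)).
Proof.
  intros l r Hlr s. destruct (LB0_rel_upclosed Hlr) as [Ul Ur].
  assert (shift : forall X : Fin T -> Prop, upclosed X ->
    (forall s', incl s s' -> X s' -> E (s' ++ s0)) <->
    (forall s'', incl (s ++ s0) s'' -> X s'' -> E s'')).
  { intros X UX; split; intros H.
    - intros s'' Hi Hx. apply (incl_app_inv _ _) in Hi as [Hs Hs0].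
      refine (o0_up _ (H s'' Hs Hx)). apply incl_app; auto using incl_refl.
    - intros s' Hi Hx. apply H.
      + apply incl_app_app; auto using incl_refl.
      + refine (UX _ _ _ Hx). apply incl_appl, incl_refl. }
  rewrite (shift l Ul), (shift r Ur). apply (o0_sat E Hlr).
Qed.

Definition himpl E s0 : O0 T := MkO0 (himpl_upclosed E s0) (himpl_saturated E s0).

Lemma bigcap_upclosed {I : Type} (F : I -> O0 T) : upclosed (fun s => forall i, F i s).
Proof. intros s s' Hi H i; exact (o0_up Hi (H i)). Qed.

Lemma bigcap_saturated {I : Type} (F : I -> O0 T) : saturated (fun s => forall i, F i s).
Proof.
  intros l r Hlr s; split; intros H s' Hi Hx i.
  - apply (proj1 (o0_sat (F i) Hlr s)); auto.
  - apply (proj2 (o0_sat (F i) Hlr s)); auto.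
Qed.

Definition bigcap {I : Type} (F : I -> O0 T) : O0 T :=
  MkO0 (bigcap_upclosed F) (bigcap_saturated F).

Lemma cl_meet {P Q} : upclosed P -> upclosed Q ->
  forall {s}, cl P s -> cl Q s -> cl (fun s => P s /\ Q s) s.
Proof.
  intros UP UQ s HP HQ E HE.
  set (F := bigcap (fun q : {q : Fin T | Q q} => himpl E (proj1_sig q))).
  assert (HF : F s).
  { refine (cl_least F _ s HP). intros p Hp [q Hq]; simpl.
    apply HE; split.
    - exact (UP _ _ (incl_appl _ (incl_refl p)) Hp).
    - exact (UQ _ _ (incl_appr _ (incl_refl q)) Hq). }
  assert (Hs : himpl E s s).
  { refine (cl_least (himpl E s) _ s HQ). intros q Hq; simpl.
    exact (o0_up (incl_app_comm s q) (HF (exist _ q Hq))). }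
  exact (o0_up (incl_app (incl_refl s) (incl_refl s)) Hs).
Qed.

Lemma saturated_rel {l r} E : LB0_rel l r ->
  (forall s, l s -> E s) <-> (forall s, r s -> E s).
Proof.
  intros Hlr. pose proof (o0_sat E Hlr []) as H.
  split; intros H1 s Hs.
  - refine (proj1 H (fun s' _ => H1 s') s _ Hs). intros x [].
  - refine (proj2 H (fun s' _ => H1 s') s _ Hs). intros x [].
Qed.

Lemma mapsto_ret_top {A B} (t : T A) (b : B) E :
  (forall s, gen (mapsto (mthen t (ret b)) b) s -> E s) -> forall s, E s.
Proof. intros H s. exact (proj1 (saturated_rel E (rel_ret t b)) H s I). Qed.

Lemma mapsto_disjoint {A} (t : T A) a a' E : a <> a' ->
  forall s, gen (mapsto t a) s -> gen (mapsto t a') s -> E s.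
Proof.
  intros Hne s H1 H2. apply (proj2 (saturated_rel E (rel_disj t Hne))); [intros _ [] | auto].
Qed.

Lemma mapsto_bind_split {A B} (t : T A) (u : A -> T B) b E :
  (forall s, gen (mapsto (bind t u) b) s -> E s) ->
  forall a s, gen (mapsto t a) s -> gen (mapsto (mthen t (u a)) b) s -> E s.
Proof. intros H a s H1 H2. apply (proj1 (saturated_rel E (rel_bind t u b)) H). eauto. Qed.

Lemma mapsto_bind_join {A B} (t : T A) (u : A -> T B) b E :
  (forall a s, gen (mapsto t a) s -> gen (mapsto (mthen t (u a)) b) s -> E s) ->
  forall s, gen (mapsto (bind t u) b) s -> E s.
Proof.
  intros H. apply (proj2 (saturated_rel E (rel_bind t u b))). intros s [a [H1 H2]]; eauto.
Qed.

Lemma mapsto_cover {A} (t : T A) E : (forall a s, gen (mapsto t a) s -> E s) -> forall s, E s.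
Proof.
  intros H. apply (mapsto_ret_top t tt).
  apply (mapsto_bind_join t (fun _ => ret tt)). eauto.
Qed.

Lemma mapsto_complemented {A} (t : T A) a : complemented (closure (gen (mapsto t a))).
Proof.
  exists (closure (fun s => exists a', a' <> a /\ gen (mapsto t a') s)). split.
  - intros x H1 H2 y s Hs.
    assert (Hc : cl (fun s => gen (mapsto t a) s /\
                              exists a', a' <> a /\ gen (mapsto t a') s) s).
    { apply cl_meet; [apply gen_upclosed | | exact (H1 s Hs) | exact (H2 s Hs)].
      intros s1 s2 Hi [a' [Ha Hg]]; exists a'; split; [exact Ha | exact (Hi _ Hg)]. }
    refine (cl_least y _ s Hc). intros s' [Hg [a' [Ha Hg']]].
    exact (mapsto_disjoint t a' a y Ha s' Hg' Hg).
  - intros x H1 H2 y s _. apply (mapsto_cover t x). intros a' s' Hg.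
    destruct (classic (a' = a)) as [->|Hne].
    + apply H1, cl_sub, Hg.
    + apply H2, cl_sub. eauto.
Qed.

Lemma mapsto_true (b : T bool) : mapsto b true = b.
Proof.
  unfold mapsto. rewrite <- (bind_ret_r b) at 2. f_equal.
  apply functional_extensionality; intros [|]; unfold delta;
    destruct (excluded_middle_informative _); congruence.
Qed.

Definition O1_compat (f : T unit -> O0 T) : Prop :=
  forall b, complemented b -> forall m1 m2, sim_b K b m1 m2 ->
    forall s, (b s /\ f m1 s) <-> (b s /\ f m2 s).

Definition O1_at (w : O1 T K) (m : T unit) : O0 T := proj1_sig w m.

Lemma O1_at_compat (w : O1 T K) {b} : complemented b -> forall {m1 m2}, sim_b K b m1 m2 ->
  forall s, b s -> (O1_at w m1 s <-> O1_at w m2 s).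
Proof.
  intros Hb m1 m2 Hsim s Hs. pose proof (proj2_sig w b Hb m1 m2 Hsim s) as H.
  unfold O1_at; tauto.
Qed.

Definition const1 D : O1 T K := exist O1_compat (fun _ => D) (fun _ _ _ _ _ _ => iff_refl _).

Lemma meet0_upclosed D E : upclosed (fun s => D s /\ E s).
Proof. intros s s' Hi [HD HE]; split; [exact (o0_up Hi HD) | exact (o0_up Hi HE)]. Qed.

Lemma meet0_saturated D E : saturated (fun s => D s /\ E s).
Proof.
  intros l r Hlr s; split; intros H s' Hi Hx; split.
  - refine (proj1 (o0_sat D Hlr s) _ s' Hi Hx). intros t Ht Hl; exact (proj1 (H t Ht Hl)).
  - refine (proj1 (o0_sat E Hlr s) _ s' Hi Hx). intros t Ht Hl; exact (proj2 (H t Ht Hl)).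
  - refine (proj2 (o0_sat D Hlr s) _ s' Hi Hx). intros t Ht Hr; exact (proj1 (H t Ht Hr)).
  - refine (proj2 (o0_sat E Hlr s) _ s' Hi Hx). intros t Ht Hr; exact (proj2 (H t Ht Hr)).
Qed.

Definition meet0 D E : O0 T := MkO0 (meet0_upclosed D E) (meet0_saturated D E).

Lemma meet1_compat (w1 w2 : O1 T K) : O1_compat (fun m => meet0 (O1_at w1 m) (O1_at w2 m)).
Proof.
  intros b Hb m1 m2 Hsim s; simpl.
  pose proof (O1_at_compat w1 Hb Hsim s). pose proof (O1_at_compat w2 Hb Hsim s).
  tauto.
Qed.

Definition meet1 (w1 w2 : O1 T K) : O1 T K := exist O1_compat _ (meet1_compat w1 w2).

Definition join1_at (S : O1 T K -> Prop) (m : T unit) : Fin T -> Prop :=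
  fun s => exists w, S w /\ O1_at w m s.

Lemma join1_at_upclosed S m : upclosed (join1_at S m).
Proof. intros s s' Hi [w [Hw H]]; exists w; split; [exact Hw | exact (o0_up Hi H)]. Qed.

Lemma join1_compat (S : O1 T K -> Prop) : O1_compat (fun m => closure (join1_at S m)).
Proof.
  intros b Hb m1 m2 Hsim s; simpl.
  assert (transfer : forall ma mb, (forall w s, b s -> O1_at w ma s -> O1_at w mb s) ->
            b s -> cl (join1_at S ma) s -> cl (join1_at S mb) s).
  { intros ma mb Hab Hbs Hc.
    assert (Hn : cl (fun s => b s /\ join1_at S ma s) s).
    { apply cl_meet; auto using cl_sub, join1_at_upclosed. intros ? ?; apply o0_up. }
    revert Hn; apply cl_mono. intros s' [Hbs' [w [Hw Hws]]]. exists w; eauto. }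
  split; intros [Hbs H]; split; auto.
  - apply (transfer m1 m2); auto. intros w s'. apply (O1_at_compat w Hb Hsim).
  - apply (transfer m2 m1); auto. intros w s' Hbs'. apply (O1_at_compat w Hb Hsim); auto.
Qed.

Definition join1 (S : O1 T K -> Prop) : O1 T K := exist O1_compat _ (join1_compat S).

(** * Trace equivalence *)

Definition tr1_gens (x y : T unit) : Fin T -> Prop := fun s =>
  exists (A : Type) (t : T A) (u u' : A -> T unit) (a : A),
    card_le A K /\ u a = u' a /\ x = bind t u /\ y = bind t u' /\ cl (gen (mapsto t a)) s.

Lemma tr1_gens_upclosed x y : upclosed (tr1_gens x y).
Proof.
  intros s s' Hi (A & t & u & u' & a & HA & Ha & Hx & Hy & Hs).
  exists A, t, u, u', a. repeat split; auto. exact (cl_upclosed _ _ Hi Hs).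
Qed.

Lemma tr1_sym {x y s} : tr1 K x y s -> tr1 K y x s.
Proof.
  apply cl_mono. intros s' (A & t & u & u' & a & HA & Ha & Hx & Hy & Hs).
  exists A, t, u', u, a; repeat split; auto.
Qed.

Lemma chain_upclosed ms : forall {x y s s'}, incl s s' -> chain K s x ms y -> chain K s' x ms y.
Proof.
  induction ms as [|m ms IH]; simpl; intros x y s s' Hi H.
  - exact (cl_upclosed _ _ Hi H).
  - destruct H as [H H']; split; [exact (cl_upclosed _ _ Hi H) | exact (IH _ _ _ _ Hi H')].
Qed.

Lemma chain_app ms : forall {x y z ms' s},
  chain K s x ms y -> chain K s y ms' z -> chain K s x (ms ++ y :: ms') z.
Proof. induction ms as [|m ms IH]; simpl; intros x y z ms' s H1 H2; [|destruct H1]; auto. Qed.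

Lemma chain_snoc ms : forall {x m y s},
  chain K s x ms m -> tr1 K m y s -> chain K s x (ms ++ [m]) y.
Proof. induction ms as [|m0 ms IH]; simpl; intros x m y s H1 H2; [|destruct H1]; auto. Qed.

Lemma chain_rev ms : forall {x y s}, chain K s x ms y -> chain K s y (rev ms) x.
Proof.
  induction ms as [|m ms IH]; simpl; intros x y s H.
  - exact (tr1_sym H).
  - destruct H as [H1 H2]. apply chain_snoc; auto using tr1_sym.
Qed.

Definition tr_chains (x y : T unit) : Fin T -> Prop := fun s => exists ms, chain K s x ms y.

Lemma tr_chains_upclosed x y : upclosed (tr_chains x y).
Proof. intros s s' Hi [ms H]; exists ms; exact (chain_upclosed ms Hi H). Qed.

(* The length bookkeeping of [[m ~_k m']] is irrelevant: [[m ~ m']] is generated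
   by all chains. *)
Lemma tr_cl_chains x y s : tr K x y s <-> cl (tr_chains x y) s.
Proof.
  split.
  - refine (cl_least (closure (tr_chains x y)) _ s). intros s' [H|[k [_ H]]].
    + apply cl_sub. exists []; exact H.
    + revert H; apply cl_mono. intros s'' [ms [_ H]]. exists ms; exact H.
  - refine (cl_least (closure _) _ s). intros s' [ms H].
    apply cl_sub. right. exists (length ms + 2). split; [lia |].
    apply cl_sub. exists ms; split; [lia | exact H].
Qed.

Lemma tr_sym {x y s} : tr K x y s -> tr K y x s.
Proof.
  rewrite !tr_cl_chains. apply cl_mono. intros s' [ms H]. exists (rev ms). exact (chain_rev ms H).
Qed.

Lemma tr_trans {x y z s} : tr K x y s -> tr K y z s -> tr K x z s.
Proof.
  rewrite !tr_cl_chains. intros Hxy Hyz.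
  generalize (cl_meet (tr_chains_upclosed x y) (tr_chains_upclosed y z) Hxy Hyz).
  apply cl_mono. intros s' [[ms H1] [ms' H2]]. exists (ms ++ y :: ms'). exact (chain_app ms H1 H2).
Qed.

Lemma tr1_transport (w : O1 T K) {x y s} : tr1 K x y s -> O1_at w x s -> O1_at w y s.
Proof.
  intros Hxy Hw.
  generalize (cl_meet (tr1_gens_upclosed x y) (o0_up (o := O1_at w x)) Hxy (cl_sub Hw)).
  apply (cl_least (O1_at w y)).
  intros s' [(A & t & u & u' & a & HA & Ha & Hx & Hy & Hs) Hws].
  refine (proj1 (O1_at_compat w (mapsto_complemented t a) (m1 := x) (m2 := y) _ s' Hs) Hws).
  intros s'' Hs''. apply cl_sub. left. apply cl_sub. exists A, t, u, u', a; auto.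
Qed.

Lemma chain_transport (w : O1 T K) ms : forall {x y s},
  chain K s x ms y -> O1_at w x s -> O1_at w y s.
Proof.
  induction ms as [|m ms IH]; simpl; intros x y s H Hw.
  - exact (tr1_transport w H Hw).
  - destruct H as [H1 H2]. exact (IH _ _ _ H2 (tr1_transport w H1 Hw)).
Qed.

Lemma tr_transport (w : O1 T K) {x y s} : tr K x y s -> O1_at w x s -> O1_at w y s.
Proof.
  rewrite tr_cl_chains. intros Hxy Hw.
  generalize (cl_meet (tr_chains_upclosed x y) (o0_up (o := O1_at w x)) Hxy (cl_sub Hw)).
  apply (cl_least (O1_at w y)). intros s' [[ms H] Hws]. exact (chain_transport w ms H Hws).
Qed.

Definition tr0 (m m' : T unit) : O0 T := MkO0 (o0 := tr K m m') cl_upclosed cl_saturated.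

Lemma tr_from_compat m : O1_compat (fun m' => tr0 m m').
Proof.
  intros b Hb m1 m2 Hsim s; simpl; split; intros [Hbs H]; split; auto.
  - exact (tr_trans H (Hsim s Hbs)).
  - exact (tr_trans H (tr_sym (Hsim s Hbs))).
Qed.

Definition tr_from m : O1 T K := exist O1_compat _ (tr_from_compat m).

Hypothesis HK : card_le unit K.

Lemma tr_refl m s : tr K m m s.
Proof.
  apply cl_sub. left. apply cl_sub.
  assert (Hm : m = bind (mthen (ret tt) (ret tt)) (fun _ => m)).
  { unfold mthen. rewrite bind_assoc, !bind_ret_l. reflexivity. }
  exists unit, (mthen (ret tt) (ret tt)), (fun _ => m), (fun _ => m), tt.
  repeat split; auto.
  apply (mapsto_ret_top (ret tt) tt (closure _)). intros; apply cl_sub; auto.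
Qed.

(** * From points to behaviours *)

Definition holds (beta : forall A : Type, T A -> A) s : Prop :=
  forall b, In b s -> beta bool b = true.

(* The point of [LB_0 T] induced by [beta], evaluated on a free-frame element. *)
Definition pt0 (beta : forall A : Type, T A -> A) P : Prop :=
  exists s, P s /\ holds beta s.

Section Point.
Variable p : O1 T K -> bool.
Hypothesis Hp : frame_hom2 (@le1 T K) p.

Lemma pt_top w : (forall m s, O1_at w m s) -> p w = true.
Proof. intros H. apply (proj1 Hp). intros w' m s _. apply H. Qed.

Lemma pt_mono {w w'} : p w = true -> le1 w w' -> p w' = true.
Proof.
  intros H Hle. rewrite (proj1 (proj2 Hp) w w w') in H; auto.
  - destruct (p w), (p w'); simpl in *; congruence.
  - intros m s; auto.
Qed.

Lemma pt_meet {w1 w2} : p w1 = true -> p w2 = true -> p (meet1 w1 w2) = true.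
Proof.
  intros H1 H2. rewrite (proj1 (proj2 Hp) (meet1 w1 w2) w1 w2), H1, H2; auto.
  - intros m s [Hs _]; exact Hs.
  - intros m s [_ Hs]; exact Hs.
  - intros z Z1 Z2 m s Hs; split; [apply Z1 | apply Z2]; exact Hs.
Qed.

Lemma pt_join S : p (join1 S) = true -> exists w, S w /\ p w = true.
Proof.
  apply (proj2 (proj2 Hp) S (join1 S)).
  - intros w Hw m s Hs. apply cl_sub. exists w; auto.
  - intros z Hz m s. apply (cl_least (O1_at z m)). intros s' [w [Hw Hs]]. exact (Hz w Hw m s' Hs).
Qed.

Lemma pt_bot : p (const1 (closure (fun _ => False))) = false.
Proof.
  destruct (p _) eqn:E; auto.
  destruct (proj1 (proj2 (proj2 Hp) (fun _ => False) (const1 (closure (fun _ => False)))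
      (fun w H => False_ind _ H)
      (fun z _ m => cl_least (O1_at z m) (fun s H => False_ind _ H))) E) as [w [[] _]].
Qed.

Definition gen1 {A} (t : T A) (a : A) : O1 T K := const1 (closure (gen (mapsto t a))).

Lemma pt_gen_exists {A} (t : T A) : exists a, p (gen1 t a) = true.
Proof.
  destruct (pt_join (fun w => exists a, w = gen1 t a)) as [w [[a ->] Hw]]; eauto.
  apply pt_top. intros m. apply (mapsto_cover t (closure _)). intros a s Hs.
  apply cl_sub. exists (gen1 t a). split; [eauto | exact (cl_sub Hs)].
Qed.

Lemma pt_gen_unique {A} (t : T A) {a a'} : p (gen1 t a) = true -> p (gen1 t a') = true -> a = a'.
Proof.
  intros H1 H2. destruct (classic (a = a')) as [|Hne]; auto. exfalso.
  enough (Hbot : p (const1 (closure (fun _ => False))) = true)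
    by (rewrite pt_bot in Hbot; discriminate).
  apply (pt_mono (pt_meet H1 H2)).
  intros m s [G1 G2]. generalize (cl_meet (gen_upclosed _) (gen_upclosed _) G1 G2).
  apply (cl_least (closure _)). intros s' [E1 E2]. exact (mapsto_disjoint t a a' _ Hne s' E1 E2).
Qed.

Definition pt_beh [A : Type] (t : T A) : A :=
  proj1_sig (ClassicalEpsilon.constructive_indefinite_description _ (pt_gen_exists t)).

Lemma pt_beh_spec {A} (t : T A) : p (gen1 t (pt_beh t)) = true.
Proof.
  exact (proj2_sig (ClassicalEpsilon.constructive_indefinite_description _ (pt_gen_exists t))).
Qed.

Lemma pt_beh_eq {A} (t : T A) a : p (gen1 t a) = true -> pt_beh t = a.
Proof. intros H. exact (pt_gen_unique t (pt_beh_spec t) H). Qed.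

Lemma pt_beh_ret {A B} (t : T A) (b : B) : pt_beh (mthen t (ret b)) = b.
Proof.
  apply pt_beh_eq, pt_top. intros m.
  apply (mapsto_ret_top t b (closure _)). intros s Hs; exact (cl_sub Hs).
Qed.

Lemma pt_beh_bind {A B} (t : T A) (u : A -> T B) :
  pt_beh (bind t u) = pt_beh (mthen t (u (pt_beh t))).
Proof.
  set (a := pt_beh t). set (b := pt_beh (mthen t (u a))).
  apply pt_beh_eq. apply (pt_mono (pt_meet (pt_beh_spec t) (pt_beh_spec (mthen t (u a))))).
  intros m s [G1 G2]. generalize (cl_meet (gen_upclosed _) (gen_upclosed _) G1 G2).
  apply (cl_least (closure _)). intros s' [E1 E2].
  apply (mapsto_bind_split t u b (closure _)) with a; auto. intros s'' Hs''; exact (cl_sub Hs'').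
Qed.

Lemma pt_beh_admissible : admissible pt_beh.
Proof.
  split.
  - intros A B f t. unfold fmap. rewrite pt_beh_bind. apply pt_beh_ret.
  - intros A B t u. apply pt_beh_bind.
Qed.

Lemma pt_rep_exists : exists m, p (tr_from m) = true.
Proof.
  destruct (pt_join (fun w => exists m, w = tr_from m)) as [w [[m ->] Hw]]; eauto.
  apply pt_top. intros m s. apply cl_sub.
  exists (tr_from m). split; [eauto | exact (tr_refl m s)].
Qed.

Definition pt_rep : T unit :=
  proj1_sig (ClassicalEpsilon.constructive_indefinite_description _ pt_rep_exists).

Lemma pt_rep_spec : p (tr_from pt_rep) = true.
Proof.
  exact (proj2_sig (ClassicalEpsilon.constructive_indefinite_description _ pt_rep_exists)).
Qed.

Definition upset s : Fin T -> Prop := fun s' => incl s s'.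

Lemma upset_upclosed s : upclosed (upset s).
Proof. intros s1 s2 H12 H1; exact (incl_tran H1 H12). Qed.

Lemma pt_gen b : p (const1 (closure (gen b))) = true <-> pt_beh b = true.
Proof.
  rewrite <- (mapsto_true b) at 1. split.
  - apply pt_beh_eq.
  - intros H. pose proof (pt_beh_spec b) as Hb. rewrite H in Hb. exact Hb.
Qed.

Lemma pt_upset s : p (const1 (closure (upset s))) = true <-> holds pt_beh s.
Proof.
  split.
  - intros H b Hb. apply pt_gen. apply (pt_mono H).
    intros m s'; simpl. apply cl_mono. intros s'' Hs''. exact (Hs'' b Hb).
  - induction s as [|b s IH]; intros Hs.
    + apply pt_top. intros m s'. apply cl_sub. intros x [].
    + assert (Hb : p (const1 (closure (gen b))) = true) by (apply pt_gen, Hs; left; auto).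
      assert (Hs' : holds pt_beh s) by (intros x Hx; apply Hs; right; exact Hx).
      apply (pt_mono (pt_meet Hb (IH Hs'))). intros m s' [G1 G2].
      generalize (cl_meet (gen_upclosed b) (upset_upclosed s) G1 G2).
      apply cl_mono. intros s'' [E1 E2] x [<-|Hx]; auto.
Qed.

(* [w] and [const1 (O1_at w pt_rep)] agree under [p], by transport along
   [[pt_rep ~ m]], which [p] validates through [tr_from pt_rep]. *)
Lemma pt_char w : p w = true <-> pt0 pt_beh (O1_at w pt_rep).
Proof.
  split.
  - intros H.
    assert (Hrep : p (const1 (O1_at w pt_rep)) = true).
    { apply (pt_mono (pt_meet H pt_rep_spec)). intros m s [Hw Htr].
      exact (tr_transport w (tr_sym Htr) Hw). }
    destruct (pt_join (fun x => exists s, O1_at w pt_rep s /\ x = const1 (closure (upset s))))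
      as [x [[s [Hs ->]] Hx]].
    + apply (pt_mono Hrep). intros m s Hs. apply cl_sub.
      exists (const1 (closure (upset s))). split; [eauto | apply cl_sub, incl_refl].
    + exists s. split; [exact Hs | exact (proj1 (pt_upset s) Hx)].
  - intros [s [Hs Hholds]].
    apply (pt_mono (pt_meet pt_rep_spec (proj2 (pt_upset s) Hholds))).
    intros m s' [Htr Hup]. refine (tr_transport w Htr _).
    refine (cl_least (O1_at w pt_rep) _ s' Hup). intros s'' Hi. exact (o0_up Hi Hs).
Qed.
End Point.

(** * From behaviours to points *)

Hypothesis Hrank : has_rank T K.

Section Behaviour.
Variable beta : forall A : Type, T A -> A.
Hypothesis Hbeta : admissible beta.

Lemma beta_mapsto_true {A} (t : T A) a : beta bool (mapsto t a) = true <-> beta A t = a.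
Proof.
  change (mapsto t a) with (fmap (delta a) t). rewrite (proj1 Hbeta). exact (bool_of_true _).
Qed.

Lemma beta_ret {A B} (t : T A) (b : B) : beta B (mthen t (ret b)) = b.
Proof. exact (proj1 Hbeta A B (fun _ => b) t). Qed.

Lemma holds_mapsto {s A} {t : T A} {a} : holds beta s -> gen (mapsto t a) s -> beta A t = a.
Proof. intros Hs Hg. exact (proj1 (beta_mapsto_true t a) (Hs _ Hg)). Qed.

Lemma holds_app {s1 s2} : holds beta s1 -> holds beta s2 -> holds beta (s1 ++ s2).
Proof. intros H1 H2 b Hb; apply in_app_or in Hb as [Hb|Hb]; auto. Qed.

Lemma pt0_rel {l r} : LB0_rel l r -> (pt0 beta l <-> pt0 beta r).
Proof.
  intros [A t a a' Hne | A B t b | A B t u b]; split.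
  - intros [s [[G1 G2] Hs]]. apply (holds_mapsto Hs) in G1, G2. congruence.
  - intros [s [[] _]].
  - intros _. exists []; split; [exact I | intros b' []].
  - intros _. exists [mapsto (mthen t (ret b)) b]; split; [left; reflexivity |].
    intros x [<-|[]]. apply beta_mapsto_true, beta_ret.
  - intros [s [G Hs]]. apply (holds_mapsto Hs) in G.
    exists [mapsto t (beta A t); mapsto (mthen t (u (beta A t))) b]. split.
    + exists (beta A t); split; [left | right; left]; reflexivity.
    + intros x [<-|[<-|[]]]; apply beta_mapsto_true; auto.
      rewrite <- G. symmetry. apply (proj2 Hbeta).
  - intros [s [[a [G1 G2]] Hs]]. apply (holds_mapsto Hs) in G1, G2.
    exists [mapsto (bind t u) b]. split; [left; reflexivity |].
    intros x [<-|[]]. apply beta_mapsto_true. rewrite (proj2 Hbeta), G1; exact G2.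
Qed.

Lemma refuted_upclosed : upclosed (fun s => ~ holds beta s).
Proof. intros s s' Hi H Hs'. apply H. intros b Hb. exact (Hs' b (Hi b Hb)). Qed.

(* Saturated because [pt0 beta] respects the relations; it makes [pt0 beta]
   commute with [cl]. *)
Lemma refuted_saturated : saturated (fun s => ~ holds beta s).
Proof.
  intros l r Hlr s. destruct (LB0_rel_upclosed Hlr) as [Ul Ur].
  destruct (classic (holds beta s)) as [Hs|Hs].
  - assert (refutes : forall X : Fin T -> Prop, upclosed X ->
      (forall s', incl s s' -> X s' -> ~ holds beta s') <-> ~ pt0 beta X).
    { intros X UX; split.
      - intros H [s' [HX Hs']]. apply (H (s' ++ s)).
        + apply incl_appr, incl_refl.
        + exact (UX _ _ (incl_appl _ (incl_refl s')) HX).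
        + exact (holds_app Hs' Hs).
      - intros H s' _ HX Hs'. apply H. exists s'; auto. }
    rewrite (refutes l Ul), (refutes r Ur), (pt0_rel Hlr). tauto.
  - split; intros _ s' Hi _ Hs'; apply Hs; intros b Hb; exact (Hs' b (Hi b Hb)).
Qed.

Definition refuted : O0 T := MkO0 refuted_upclosed refuted_saturated.

Lemma pt0_cl {P} : pt0 beta (cl P) -> pt0 beta P.
Proof.
  intros [s [Hs Hholds]]. apply NNPP. intros HP.
  refine (cl_least refuted _ s Hs Hholds). intros s' Hs' Hholds'. apply HP. exists s'; auto.
Qed.

Lemma pt0_mono {P Q} : (forall s, P s -> Q s) -> pt0 beta P -> pt0 beta Q.
Proof. intros HPQ [s [Hs Hholds]]. exists s; auto. Qed.

Lemma pt0_mapsto_beta {A} (t : T A) : pt0 beta (closure (gen (mapsto t (beta A t)))).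
Proof.
  exists [mapsto t (beta A t)]. split; [apply cl_sub; left; reflexivity |].
  intros x [<-|[]]. apply beta_mapsto_true; reflexivity.
Qed.

Lemma pt0_meet {D E} : pt0 beta D -> pt0 beta E -> pt0 beta (fun s => D s /\ E s).
Proof.
  intros [s1 [H1 T1]] [s2 [H2 T2]]. exists (s1 ++ s2). split; [split|exact (holds_app T1 T2)].
  - exact (o0_up (incl_appl _ (incl_refl s1)) H1).
  - exact (o0_up (incl_appr _ (incl_refl s2)) H2).
Qed.

Lemma tr1_sound {x y s} : tr1 K x y s -> holds beta s -> beh_eq beta x y.
Proof.
  intros Hxy Hs.
  destruct (pt0_cl (ex_intro _ s (conj Hxy Hs)))
    as [s' [(A & t & u & u' & a & _ & Ha & -> & -> & Hg) Hs']].
  destruct (pt0_cl (ex_intro _ s' (conj Hg Hs'))) as [s'' [Hg' Hs'']].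
  rewrite <- (holds_mapsto Hs'' Hg') in Ha.
  apply rst_trans with (mthen t (u (beta A t))).
  - apply rst_step. exists A, t, u. auto.
  - apply rst_sym, rst_step. exists A, t, u'. rewrite Ha. auto.
Qed.

Lemma chain_sound ms : forall {x y s}, chain K s x ms y -> holds beta s -> beh_eq beta x y.
Proof.
  induction ms as [|m ms IH]; simpl; intros x y s H Hs.
  - exact (tr1_sound H Hs).
  - destruct H as [H1 H2]. exact (rst_trans _ _ _ _ _ (tr1_sound H1 Hs) (IH _ _ _ H2 Hs)).
Qed.

Lemma tr_sound x y : pt0 beta (tr K x y) -> beh_eq beta x y.
Proof.
  intros [s [Hxy Hs]]. rewrite tr_cl_chains in Hxy.
  destruct (pt0_cl (ex_intro _ s (conj Hxy Hs))) as [s' [[ms H] Hs']].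
  exact (chain_sound ms H Hs').
Qed.

(* By rank, [t] factors through some [t' : T I] with [|I| < kappa]; the step is then
   a generator of [[m1 ~_1 m2]] above the complemented [[t' |-> beta t']]. *)
Lemma pt0_beh_step (w : O1 T K) {m1 m2} : beh_step beta m1 m2 ->
  pt0 beta (O1_at w m1) <-> pt0 beta (O1_at w m2).
Proof.
  intros (A & t & u & -> & ->).
  destruct (Hrank A t) as (I & t' & f & [HI _] & ->).
  set (i := beta I t').
  assert (Hf : beta A (bind t' (fun j => ret (f j))) = f i) by exact (proj1 Hbeta I A f t').
  rewrite Hf.
  assert (Hsim : sim_b K (closure (gen (mapsto t' i)))
                   (bind (bind t' (fun j => ret (f j))) u)
                   (mthen (bind t' (fun j => ret (f j))) (u (f i)))).
  { intros s Hs. apply cl_sub. left. apply cl_sub.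
    exists I, t', (fun j => u (f j)), (fun _ => u (f i)), i.
    unfold mthen. rewrite !bind_assoc. repeat split; auto;
      f_equal; apply functional_extensionality; intros j; rewrite bind_ret_l; reflexivity. }
  pose proof (pt0_mapsto_beta t') as Hi.
  pose proof (O1_at_compat w (mapsto_complemented t' i) Hsim) as Hw.
  split; intros H; destruct (pt0_meet H Hi) as [s [[Hws Hs] Hholds]];
    exists s; split; auto; apply (Hw s Hs); exact Hws.
Qed.

Lemma pt0_beh_eq (w : O1 T K) {m1 m2} : beh_eq beta m1 m2 ->
  pt0 beta (O1_at w m1) <-> pt0 beta (O1_at w m2).
Proof.
  induction 1 as [? ? Hstep| | ? ? _ IH | ? ? ? _ IH1 _ IH2];
    [exact (pt0_beh_step w Hstep) | tauto | tauto | tauto].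
Qed.

Lemma pt0_at_hom m : frame_hom2 (@le1 T K) (fun w => bool_of (pt0 beta (O1_at w m))).
Proof.
  split; [|split].
  - intros w Htop. apply bool_of_true. exists []. split; [|intros b []].
    exact (Htop (const1 (closure (fun _ => True))) m [] (cl_sub I)).
  - intros w w1 w2 H1 H2 Hglb. apply bool_of_and. split.
    + intros Hw. split; exact (pt0_mono (H1 m) Hw) || exact (pt0_mono (H2 m) Hw).
    + intros [Hw1 Hw2]. refine (pt0_mono _ (pt0_meet Hw1 Hw2)).
      apply (Hglb (meet1 w1 w2)); intros m' s [Hs1 Hs2]; assumption.
  - intros S w Hub Hlub. rewrite bool_of_true. split.
    + intros Hw.
      assert (Hjoin : pt0 beta (cl (join1_at S m))).
      { refine (pt0_mono _ Hw). apply (Hlub (join1 S)).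
        intros x Hx m' s Hs. apply cl_sub. exists x; auto. }
      destruct (pt0_cl Hjoin) as [s [[x [Hx Hs]] Hholds]].
      exists x. split; [exact Hx | apply bool_of_true; exists s; auto].
    + intros [x [Hx Hxm]]. rewrite bool_of_true in Hxm. exact (pt0_mono (Hub x Hx m) Hxm).
Qed.

Variable C : T unit -> Prop.
Hypothesis HC : is_beh_class beta C.

Definition beh_pt (w : O1 T K) : bool := bool_of (exists m, C m /\ pt0 beta (O1_at w m)).

Lemma beh_class_inhabited : exists m, C m.
Proof. destruct HC as [m Hm]. exists m. apply Hm, rst_refl. Qed.

Lemma beh_class_iff {m0} : C m0 -> forall m, C m <-> beh_eq beta m0 m.
Proof.
  destruct HC as [t Ht]. intros H0 m. rewrite !Ht in *. split; intros H.
  - exact (rst_trans _ _ _ _ _ (rst_sym _ _ _ _ H0) H).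
  - exact (rst_trans _ _ _ _ _ H0 H).
Qed.

Lemma beh_pt_at {m} : C m -> beh_pt = fun w => bool_of (pt0 beta (O1_at w m)).
Proof.
  intros Hm. apply functional_extensionality; intros w. apply bool_of_ext. split.
  - intros [m' [Hm' Hw]]. exact (proj1 (pt0_beh_eq w (proj1 (beh_class_iff Hm' m) Hm)) Hw).
  - eauto.
Qed.

Lemma beh_pt_true {m} w : C m -> beh_pt w = true <-> pt0 beta (O1_at w m).
Proof. intros Hm. rewrite (equal_f (beh_pt_at Hm) w). apply bool_of_true. Qed.

Lemma beh_pt_hom : frame_hom2 (@le1 T K) beh_pt.
Proof. destruct beh_class_inhabited as [m Hm]. rewrite (beh_pt_at Hm). apply pt0_at_hom. Qed.

Lemma pt_beh_beh_pt {A} (t : T A) : pt_beh beh_pt beh_pt_hom t = beta A t.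
Proof.
  apply pt_beh_eq. destruct beh_class_inhabited as [m Hm].
  apply (beh_pt_true _ Hm), pt0_mapsto_beta.
Qed.

Lemma beh_class_pt_rep m : C m <-> beh_eq beta (pt_rep beh_pt beh_pt_hom) m.
Proof.
  destruct beh_class_inhabited as [m0 Hm0].
  assert (Hrep : beh_eq beta (pt_rep beh_pt beh_pt_hom) m0).
  { apply tr_sound. exact (proj1 (beh_pt_true _ Hm0) (pt_rep_spec _ beh_pt_hom)). }
  rewrite (beh_class_iff Hm0). split; intros H.
  - exact (rst_trans _ _ _ _ _ Hrep H).
  - exact (rst_trans _ _ _ _ _ (rst_sym _ _ _ _ Hrep) H).
Qed.
End Behaviour.

Lemma beh_eq_class (beta : forall A : Type, T A -> A) m : is_beh_class beta (beh_eq beta m).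
Proof. exists m. intros x. reflexivity. Qed.

Definition beh_of_pt (p : pt_LB1 T K) : B1 T :=
  existT _ (exist _ _ (pt_beh_admissible _ (proj2_sig p)))
    (exist _ _ (beh_eq_class _ (pt_rep _ (proj2_sig p)))).

Definition pt_of_beh (x : B1 T) : pt_LB1 T K :=
  exist _ _ (beh_pt_hom _ (proj2_sig (projT1 x)) _ (proj2_sig (projT2 x))).

Lemma B1_ext (x y : B1 T) :
  proj1_sig (projT1 x) = proj1_sig (projT1 y) ->
  (forall m, proj1_sig (projT2 x) m <-> proj1_sig (projT2 y) m) -> x = y.
Proof.
  destruct x as [[b1 h1] [c1 k1]], y as [[b2 h2] [c2 k2]]; simpl. intros <- HC.
  assert (c1 = c2) as <-.
  { apply functional_extensionality; intros m. apply propositional_extensionality, HC. }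
  rewrite (proof_irrelevance _ h1 h2), (proof_irrelevance _ k1 k2). reflexivity.
Qed.

Lemma beh_of_ptK p : pt_of_beh (beh_of_pt p) = p.
Proof.
  destruct p as [p Hp]. apply subset_eq_compat. apply functional_extensionality; intros w.
  apply eq_true_iff_eq. simpl.
  rewrite (beh_pt_true _ (pt_beh_admissible _ Hp) _ (beh_eq_class _ _) w (rst_refl _ _ _)).
  symmetry. apply pt_char.
Qed.

Lemma pt_of_behK x : beh_of_pt (pt_of_beh x) = x.
Proof.
  destruct x as [[beta Hbeta] [C HC]].
  assert (Hb : pt_beh _ (beh_pt_hom _ Hbeta _ HC) = beta).
  { apply functional_extensionality_dep; intros A. apply functional_extensionality; intros t.
    apply pt_beh_beh_pt. }
  apply B1_ext; simpl; [exact Hb|]. intros m. rewrite Hb.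
  symmetry. apply beh_class_pt_rep.
Qed.
End Transitions.

(* Regularity of [kappa] is only needed for [|1| <= kappa], which gives [[m ~ m]]. *)
Lemma regular_unit_le {K : Type} : regular K -> card_le unit K.
Proof. intros [[f _] _]. exists (fun _ => f 0). intros [] [] _; reflexivity. Qed.

Theorem proposition3p13 (T : monad) (K : Type) :
  regular K -> has_rank T K -> in_bijection (pt_LB1 T K) (B1 T).
Proof.
  intros Hreg Hrank. pose proof (regular_unit_le Hreg) as HK.
  exists (beh_of_pt _ _ HK), (pt_of_beh _ _ Hrank).
  split; [apply beh_of_ptK | apply pt_of_behK].
Qed.
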